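(* Let $P$ be the Petersen graph and $\mathcal{N}P$ its normal graph algebra over a field $\mathbb{F}$ of characteristic not $2$. For distinct $i,j\in\{1,\dots,6\}$ let $\mathbf{ij}\in U_P$ denote the vertex $\{i,j\}$ if $i,j\le5$, and $u_i$ if $j=6$ (similarly $u_j$ if $i=6$). For $1\le i\le 6$ let $\mathcal{F}_i=\{\langle\mathbf{ij}\rangle: j\in\{1,\dots,6\},\,j\neq i\}$, a set of five one-dimensional subspaces of $U_P$. If $g$ is an automorphism of $\mathcal{N}P$ such that for each $i$, $g$ maps every member of $\mathcal{F}_i$ to a member of $\mathcal{F}_i$, then $g$ is a scalar automorphism.
   Context: The Petersen graph $P$ has as vertices the 2-element subsets $\{i,j\}$ of $\{1,\dots,5\}$, two vertices adjacent iff disjoint. $\mathcal{N}P=U_P\oplus\mathfrak{Z}_P$ with $U_P$ having basis the vertices and $\mathfrak{Z}_P$ basis the edges, commutative bilinear product determined by: for distinct vertices $x,y$, $xy$ is the edge joining them if adjacent and $0$ otherwise; $x^2$ is the sum of the three edges at $x$; products involving $\mathfrak{Z}_P$ are $0$. For $1\le i\le5$, $u_i=\frac12\left(\sum_{i\notin A}A-\sum_{i\in A}A\right)$, sums over vertices $A$. An automorphism of $\mathcal{N}P$ is a product-preserving linear bijection mapping $U_P$ onto $U_P$ and $\mathfrak{Z}_P$ onto $\mathfrak{Z}_P$; it is scalar if for some $\alpha\neq0$ it is $u\mapsto\alpha u$ on $U_P$ and $\mathfrak{z}\mapsto\alpha^2\mathfrak{z}$ on $\mathfrak{Z}_P$.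 *)

From HB Require Import structures.
From mathcomp Require Import all_boot all_order all_algebra.
Set Implicit Arguments. Unset Strict Implicit. Unset Printing Implicit Defensive.
Import GRing.Theory.
Local Open Scope ring_scope.

(* Vertices of the Petersen graph: 2-element subsets of {1..5} (here 'I_5 = {0..4}). *)
Notation PV := {A : {set 'I_5} | #|A| == 2%N}.

Definition padj (a b : PV) : bool := [disjoint val a & val b].

Notation PE := {e : {set PV} | [exists a, exists b, padj a b && (e == [set a; b])]}.

Notation UP F := {ffun PV -> F^o}.
Notation ZP F := {ffun PE -> F^o}.
Notation NP F := (UP F * ZP F)%type.

Section Alg.
Variable F : fieldType.
Local Notation UP := (UP F).
Local Notation ZP := (ZP F).
Local Notation NP := (NP F).



Definition basisU (a : PV) : UP := [ffun b => if b == a then 1 else 0].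
Definition basisZ (e : PE) : ZP := [ffun e' => if e' == e then 1 else 0].

(* product of basis vertices: the edge joining a,b if adjacent (the unique edge e
   with val e = {a,b}, written as a sum over that singleton), the sum of the three
   edges at a if a = b, and 0 otherwise *)
Definition bprod (a b : PV) : ZP :=
  if a == b then \sum_(e : PE | a \in val e) basisZ e
  else if padj a b then \sum_(e : PE | val e == [set a; b]) basisZ e
  else 0.

Definition mulU (u w : UP) : ZP :=
  \sum_(a : PV) \sum_(b : PV) (u a * w b) *: bprod a b.

Definition mulNP (x y : NP) : NP := (0, mulU x.1 y.1).

Definition is_autNP (g : NP -> NP) : Prop :=
  [/\ (forall (c : F) (x y : NP), g (c *: x + y) = c *: g x + g y),
      bijective g,
      (forall x y : NP, g (mulNP x y) = mulNP (g x) (g y)),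
      (forall x : NP, (exists u : UP, g (u, 0) = x) <-> (exists u : UP, x = (u, 0)))
    & (forall x : NP, (exists z : ZP, g (0, z) = x) <-> (exists z : ZP, x = (0, z)))].

Definition is_scalar_autNP (g : NP -> NP) : Prop :=
  exists2 alpha : F, alpha != 0 &
    (forall u : UP, g (u, 0) = (alpha *: u, 0)) /\
    (forall z : ZP, g (0, z) = (0, alpha ^+ 2 *: z)).

Definition uvec (i : 'I_5) : UP :=
  (2%:R)^-1 *: (\sum_(A : PV | i \notin val A) basisU A
                - \sum_(A : PV | i \in val A) basisU A).

(* bold ij for distinct i j in {1..6} (here 'I_6 = {0..5}, 5 playing the role of 6):
   the vertex {i,j} if both are < 5, else u_i (if j is the sixth index) or u_j. *)
Definition bold (i j : 'I_6) : UP :=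
  if ((i < 5)%N && (j < 5)%N) then
    [ffun A : PV => if val A == [set (inord i : 'I_5); inord j] then 1 else 0]
  else if (j == 5%N :> nat) then uvec (inord i) else uvec (inord j).

Definition line (v : UP) : UP -> Prop := fun w => exists c : F, w = c *: v.

Definition maps_line_to (g : NP -> NP) (v w : UP) : Prop :=
  forall x : UP, line w x <-> exists y : UP, line v y /\ g (y, 0) = (x, 0).

End Alg.

From HB Require Import structures.
From mathcomp Require Import all_boot all_order all_algebra.
From mathcomp Require Import zify.
Set Implicit Arguments. Unset Strict Implicit. Unset Printing Implicit Defensive.
Import GRing.Theory.
Local Open Scope ring_scope.

(* Every vertex {p,q} lies in F_p and in F_q, and <{p,q}> is the only line common to F_p and F_q:
   a line <u_i> contains only vectors of full support, a line <{p,k}> only vectors supported by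
   one vertex, and <{p,k}> = <{q,l}> forces {p,k} = {q,l}.  So g(A) = lam_A A on vertices.
   Multiplicativity then gives g(ab) = lam_a lam_b ab, and reading off the coefficient of the
   edge ab in g(a^2) = lam_a^2 a^2, where a^2 is the sum of the edges at a, gives lam_a = lam_b
   for adjacent a, b.  The Petersen graph has diameter 2, so lam is constant. *)

Section DiagonalLinear.
Variables (F : fieldType) (T : finType).

(* [basisU F A] and [basisZ F e] are instances of [delta] up to conversion. *)
Definition delta (a : T) : {ffun T -> F^o} := [ffun b => if b == a then 1 else 0].

Lemma scale_ffunE (c : F) (u : {ffun T -> F^o}) (a : T) : (c *: u) a = c * u a.
Proof. exact: ffunE. Qed.

Lemma sum_deltaE (P : pred T) (b : T) :
  (\sum_(a | P a) delta a) b = if P b then 1 else 0.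
Proof.
rewrite sum_ffunE big_mkcond (bigD1 b) //= ffunE eqxx big1 ?addr0 => [|a ab].
  by case: (P b).
by rewrite ffunE eq_sym (negbTE ab) if_same.
Qed.

Lemma ffun_delta_expand (u : {ffun T -> F^o}) : u = \sum_a u a *: delta a.
Proof.
apply/ffunP => b; rewrite sum_ffunE (bigD1 b) //= big1 => [|a /negbTE ab].
  by rewrite scale_ffunE ffunE eqxx mulr1 addr0.
by rewrite scale_ffunE ffunE eq_sym ab mulr0.
Qed.

Lemma diagonal_linearE (h : {linear {ffun T -> F^o} -> {ffun T -> F^o}}) (mu : T -> F) :
  (forall a, h (delta a) = mu a *: delta a) -> forall u, h u = [ffun a => mu a * u a].
Proof.
move=> h_delta u; rewrite {1}(ffun_delta_expand u) linear_sum.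
apply/ffunP => b; rewrite sum_ffunE (bigD1 b) //= big1 => [|a /negbTE ab].
  by rewrite linearZ h_delta !scale_ffunE !ffunE eqxx !mulr1 addr0 mulrC.
by rewrite linearZ h_delta !scale_ffunE ffunE eq_sym ab !mulr0.
Qed.

Lemma scalar_linearE (h : {linear {ffun T -> F^o} -> {ffun T -> F^o}}) (c : F) :
  (forall a, h (delta a) = c *: delta a) -> forall u, h u = c *: u.
Proof.
by move=> h_delta u; rewrite (diagonal_linearE h_delta); apply/ffunP => a; rewrite !ffunE.
Qed.

End DiagonalLinear.

Section Embeddings.
Variable F : fieldType.

Definition inU (u : UP F) : NP F := (u, 0).
Definition inZ (z : ZP F) : NP F := (0, z).

Lemma inU_is_linear : linear inU.
Proof. by move=> c u v; rewrite /inU; congr (_, _); rewrite /= scaler0 addr0. Qed.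
HB.instance Definition _ := GRing.isLinear.Build F (UP F) (NP F) _ inU inU_is_linear.

Lemma inZ_is_linear : linear inZ.
Proof. by move=> c u v; rewrite /inZ; congr (_, _); rewrite /= scaler0 addr0. Qed.
HB.instance Definition _ := GRing.isLinear.Build F (ZP F) (NP F) _ inZ inZ_is_linear.

End Embeddings.

Lemma padj_neq (a b : PV) : padj a b -> a != b.
Proof.
apply: contraTneq => ->; rewrite /padj -setI_eq0 setIid -cards_eq0.
by rewrite (eqP (valP b)).
Qed.

Lemma edge_ends (e : PE) : exists a b, padj a b /\ val e = [set a; b].
Proof. by have /existsP [a /existsP [b /andP [ab /eqP E]]] := valP e; exists a, b. Qed.

Lemma edge_of_padj (a b : PV) : padj a b -> exists e : PE, val e = [set a; b].
Proof.
move=> ab; have Pab : [exists a', exists b', padj a' b' && ([set a; b] == [set a'; b'])].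
  by apply/existsP; exists a; apply/existsP; exists b; rewrite ab eqxx.
by exists (Sub [set a; b] Pab).
Qed.

Lemma petersen_common_neighbour (a b : PV) :
  ~~ padj a b -> exists c : PV, padj a c && padj c b.
Proof.
rewrite /padj -setI_eq0 -card_gt0 => meet_ab.
have : (1 < #|~: (val a :|: val b)|)%N.
  have := cardsUI (val a) (val b); have := cardsC (val a :|: val b).
  rewrite (eqP (valP a)) (eqP (valP b)) card_ord; lia.
case/card_gt1P => x [y [xab yab xy]].
have Cxy : #|[set x; y]| == 2%N by rewrite cards2 xy.
have sub_xy : [set x; y] \subset ~: (val a :|: val b) by rewrite subUset !sub1set xab yab.
exists (Sub [set x; y] Cxy); rewrite /= disjoint_sym !disjoints_subset.
by rewrite !(subset_trans sub_xy) // setCS ?subsetUl ?subsetUr.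
Qed.

Lemma cards2_neq (T : finType) (x y : T) : x != y -> #|[set x; y]| == 2%N.
Proof. by rewrite cards2 => ->. Qed.

Definition vertex (p q : 'I_5) (pq : p != q) : PV := Sub [set p; q] (cards2_neq pq).

Lemma third_point (p q : 'I_5) : exists m : 'I_5, m \notin [set p; q].
Proof.
have /subsetPn [m _ npq] : ~~ ([set: 'I_5] \subset [set p; q]).
  by apply/negP => /subset_leq_card; rewrite cardsT card_ord cards2; case: (p != q).
by exists m.
Qed.

Lemma other_vertex (S : {set 'I_5}) : exists B : PV, val B != S.
Proof.
have n01 : (0 : 'I_5) != 1 by []; have n23 : (2 : 'I_5) != 3 by [].
have [E|] := eqVneq [set (0 : 'I_5); 1] S; last by exists (vertex n01).
exists (vertex n23); rewrite /= -E; apply/negP => /eqP /setP /(_ 2).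
by rewrite !inE.
Qed.

Local Notation i6 p := (lift ord_max p : 'I_6).

Section Vectors.
Variable F : fieldType.

Lemma uvecE (p : 'I_5) (B : PV) :
  uvec F p B = if p \in val B then - 2%:R^-1 else 2%:R^-1.
Proof.
rewrite /uvec scale_ffunE !ffunE (sum_deltaE F (fun A : PV => p \notin val A)).
rewrite (sum_deltaE F (fun A : PV => p \in val A)).
by case: (p \in val B); rewrite ?sub0r ?subr0 ?mulrN ?mulr1.
Qed.

Lemma bprod_diagE (a : PV) (e : PE) : bprod F a a e = if a \in val e then 1 else 0.
Proof. by rewrite /bprod eqxx (sum_deltaE F (fun e : PE => a \in val e)). Qed.

Lemma bprod_edge (a b : PV) (e : PE) :
  padj a b -> val e = [set a; b] -> bprod F a b = basisZ F e.
Proof.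
move=> ab e_ab; rewrite /bprod (negbTE (padj_neq ab)) ab (big_pred1 e) // => e'.
by rewrite /= -e_ab (inj_eq val_inj).
Qed.

Lemma mulU_scale (c d : F) (u w : UP F) : mulU (c *: u) (d *: w) = (c * d) *: mulU u w.
Proof.
rewrite /mulU scaler_sumr; apply: eq_bigr => a _.
rewrite scaler_sumr; apply: eq_bigr => b _.
by rewrite !scale_ffunE scalerA mulrACA.
Qed.

Lemma mulU_basis (a b : PV) : mulU (basisU F a) (basisU F b) = bprod F a b.
Proof.
rewrite /mulU (bigD1 a) //= (bigD1 b) //= !big1 => [|c ca|c cb].
- by rewrite !ffunE !eqxx mulr1 scale1r !addr0.
- by apply: big1 => d _; rewrite ffunE (negbTE ca) mul0r scale0r.
- by rewrite !ffunE (negbTE cb) mulr0 scale0r.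
Qed.

Lemma basisU_neq0 (A : PV) : basisU F A != 0.
Proof. by apply/eqP => /ffunP /(_ A) /eqP; rewrite !ffunE eqxx oner_eq0. Qed.

Definition pair_vec (p q : 'I_5) : UP F :=
  [ffun A : PV => if val A == [set p; q] then 1 else 0].

Lemma pair_vec_basisU (A : PV) (p q : 'I_5) :
  val A = [set p; q] -> pair_vec p q = basisU F A.
Proof. by move=> Apq; apply/ffunP => B; rewrite !ffunE -Apq. Qed.

Lemma bold_lift (p q : 'I_5) : bold F (i6 p) (i6 q) = pair_vec p q.
Proof. by rewrite /bold !lift_max !ltn_ord /= !inord_val. Qed.

Lemma bold_lift_max (p : 'I_5) : bold F (i6 p) ord_max = uvec F p.
Proof. by rewrite /bold lift_max ltnn andbF eqxx inord_val. Qed.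

Lemma bold_max_lift (p : 'I_5) : bold F ord_max (i6 p) = uvec F p.
Proof. by rewrite /bold lift_max ltnn /= (ltn_eqF (ltn_ord p)) inord_val. Qed.

Section Lines.
Hypothesis two_neq0 : (2%:R : F) != 0.

Lemma uvec_neq0 (p : 'I_5) (B : PV) : uvec F p B != 0.
Proof. by rewrite uvecE; case: ifP; rewrite ?oppr_eq0 invr_eq0. Qed.

Lemma scale_ffun_eqE (v w x : UP F) (c d : F) :
  x = c *: v -> x = d *: w -> forall B, c * v B = d * w B.
Proof. by move=> -> E B; rewrite -!scale_ffunE E. Qed.

Lemma uvec_lines_meet (p q : 'I_5) (x : UP F) :
  p != q -> line (uvec F p) x -> line (uvec F q) x -> x = 0.
Proof.
move=> pq [c xc] [d xd]; have [m] := third_point p q; rewrite !inE negb_or => /andP [mp mq].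
have pm : p != m by rewrite eq_sym.
(* At {p,q} both vectors take the value -1/2, at {p,m} opposite values: so c = d = -c. *)
have := scale_ffun_eqE xc xd (vertex pq); have := scale_ffun_eqE xc xd (vertex pm).
rewrite !uvecE /= !inE !eqxx orbT (eq_sym q p) (negbTE pq) (eq_sym q m) (negbTE mq) /=.
rewrite !mulrN => Epm /oppr_inj Epq.
have cd : c = d by apply: mulIf Epq; rewrite invr_eq0.
move: Epm; rewrite -cd => /eqP; rewrite eq_sym -subr_eq0 opprK -mulr2n.
rewrite -[c / 2 *+ 2]mulr_natr !mulf_eq0 invr_eq0 (negbTE two_neq0) !orbF.
by rewrite xc => /eqP ->; rewrite scale0r.
Qed.

Lemma uvec_pair_lines_meet (p q l : 'I_5) (x : UP F) :
  line (uvec F p) x -> line (pair_vec q l) x -> x = 0.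
Proof.
move=> [c xc] [d xd]; have [B nB] := other_vertex [set q; l].
have := scale_ffun_eqE xc xd B; rewrite [pair_vec _ _ _]ffunE (negbTE nB) mulr0 => /eqP.
by rewrite mulf_eq0 (negbTE (uvec_neq0 p B)) orbF xc => /eqP ->; rewrite scale0r.
Qed.

Lemma pair_lines_meet (p q k l : 'I_5) (x : UP F) :
  x != 0 -> k != p -> line (pair_vec p k) x -> line (pair_vec q l) x ->
  [set p; k] = [set q; l].
Proof.
move=> x0 kp [c xc] [d xd]; have pk : p != k by rewrite eq_sym.
have := scale_ffun_eqE xc xd (vertex pk); rewrite !ffunE /= eqxx mulr1.
by case: eqP => // _; rewrite mulr0 => c0; move: x0; rewrite xc c0 scale0r eqxx.
Qed.

Lemma bold_lines_meet (p q : 'I_5) (k l : 'I_6) (x : UP F) :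
  p != q -> x != 0 -> k != i6 p -> l != i6 q ->
  line (bold F (i6 p) k) x -> line (bold F (i6 q) l) x -> k = i6 q.
Proof.
move=> pq x0.
case: (unliftP ord_max k) => [k' ->|->]; case: (unliftP ord_max l) => [l' ->|->];
  rewrite ?bold_lift ?bold_lift_max => kp lq xk xl.
- have k'p : k' != p by apply: contraNneq kp => ->.
  have E := pair_lines_meet x0 k'p xk xl.
  have : p \in [set q; l'] by rewrite -E set21.
  have : k' \in [set q; l'] by rewrite -E set22.
  rewrite !inE (negbTE pq) /= => /orP [/eqP -> // | /eqP kl /eqP pl].
  by rewrite kl -pl eqxx in k'p.
- by rewrite (uvec_pair_lines_meet xl xk) eqxx in x0.
- by rewrite (uvec_pair_lines_meet xk xl) eqxx in x0.
- by rewrite (uvec_lines_meet pq xk xl) eqxx in x0.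
Qed.

End Lines.

End Vectors.

Section Automorphism.
Variables (F : fieldType) (g : {linear NP F -> NP F}).
Hypothesis two_neq0 : (2%:R : F) != 0.
Hypothesis g_inj : injective g.
Hypothesis g_mul : forall x y : NP F, g (mulNP x y) = mulNP (g x) (g y).
Hypothesis g_stableU : forall u : UP F, exists u', g (inU u) = inU u'.
Hypothesis g_stableZ : forall z : ZP F, exists z', g (inZ z) = inZ z'.
Hypothesis g_lines : forall i j : 'I_6, j != i ->
  exists2 k : 'I_6, k != i & maps_line_to g (bold F i j) (bold F i k).

Definition gu : {linear UP F -> UP F} := fst \o g \o @inU F.
Definition gz : {linear ZP F -> ZP F} := snd \o g \o @inZ F.

Lemma g_inU (u : UP F) : g (inU u) = inU (gu u).
Proof. by rewrite /gu /=; have [u' ->] := g_stableU u. Qed.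

Lemma g_inZ (z : ZP F) : g (inZ z) = inZ (gz z).
Proof. by rewrite /gz /=; have [z' ->] := g_stableZ z. Qed.

Lemma gu_inj : injective gu.
Proof. by move=> u v /(congr1 (@inU F)); rewrite -!g_inU => /g_inj []. Qed.

Lemma gz_mulU (u w : UP F) : gz (mulU u w) = mulU (gu u) (gu w).
Proof.
by rewrite /gz /= -[inZ (mulU u w)]/(mulNP (inU u) (inU w)) g_mul !g_inU.
Qed.

Definition lam (A : PV) : F := gu (basisU F A) A.

Lemma gu_basisU (A : PV) : gu (basisU F A) = lam A *: basisU F A.
Proof.
have /cards2P [p [q [pq Apq]]] := valP A.
set x := gu (basisU F A).
have x0 : x != 0 by rewrite -(linear0 gu) (inj_eq gu_inj) basisU_neq0.
have x_line i j :
    i != j -> val A = [set i; j] -> exists2 k, k != i6 i & line (bold F (i6 i) k) x.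
  move=> ij Aij; have ji : i6 j != i6 i by rewrite (inj_eq (@lift_inj _ _)) eq_sym.
  have [k ki k_line] := g_lines ji; exists k => //; apply/k_line.
  exists (basisU F A); split; last exact: g_inU.
  by exists 1; rewrite scale1r bold_lift (pair_vec_basisU F Aij).
have [k kp xk] := x_line p q pq Apq.
have qp : q != p by rewrite eq_sym.
have [l lq xl] := x_line q p qp (etrans Apq (setUC _ _)).
have [c] := xk; rewrite (bold_lines_meet two_neq0 pq x0 kp lq xk xl) bold_lift.
rewrite (pair_vec_basisU F Apq) => xc.
by rewrite /lam -/x xc scale_ffunE ffunE eqxx mulr1.
Qed.

Lemma lam_neq0 (A : PV) : lam A != 0.
Proof.
apply/negP => /eqP l0; have := gu_basisU A.
by rewrite l0 scale0r -(linear0 gu) => /gu_inj /eqP; apply/negP/basisU_neq0.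
Qed.

Lemma gz_bprod (a b : PV) : gz (bprod F a b) = (lam a * lam b) *: bprod F a b.
Proof. by rewrite -mulU_basis gz_mulU !gu_basisU mulU_scale. Qed.

Lemma gz_basisZ (a b : PV) (e : PE) :
  padj a b -> val e = [set a; b] -> gz (basisZ F e) = (lam a * lam b) *: basisZ F e.
Proof. by move=> ab e_ab; rewrite -(bprod_edge F ab e_ab) gz_bprod. Qed.

Lemma lam_padj (a b : PV) : padj a b -> lam a = lam b.
Proof.
move=> ab; have [e e_ab] := edge_of_padj ab.
pose mu (e' : PE) := gz (basisZ F e') e'.
have gz_delta e' : gz (delta F e') = mu e' *: delta F e'.
  have [a' [b' [ab' e'_ab']]] := edge_ends e'.
  by rewrite /mu (gz_basisZ ab' e'_ab') scale_ffunE ffunE eqxx mulr1.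
have := diagonal_linearE gz_delta (bprod F a a); rewrite gz_bprod => /ffunP /(_ e).
rewrite scale_ffunE ffunE bprod_diagE e_ab set21 /mu (gz_basisZ ab e_ab).
by rewrite scale_ffunE ffunE eqxx !mulr1 => /(mulfI (lam_neq0 a)).
Qed.

Lemma lam_const (a b : PV) : lam a = lam b.
Proof.
have [ab|nab] := boolP (padj a b); first exact: lam_padj.
have [c /andP [ac cb]] := petersen_common_neighbour nab.
by rewrite (lam_padj ac) (lam_padj cb).
Qed.

Lemma scalar_aut : is_scalar_autNP g.
Proof.
have n01 : (0 : 'I_5) != 1 by [].
exists (lam (vertex n01)); first exact: lam_neq0.
split => [u|z].
- rewrite -[(u, 0)]/(inU u) g_inU (scalar_linearE (h := gu) (c := lam (vertex n01))) // => A.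
  by rewrite gu_basisU (lam_const A (vertex n01)).
- rewrite -[(0, z)]/(inZ z) g_inZ (scalar_linearE (h := gz) (c := lam (vertex n01) ^+ 2)) // => e.
  have [a [b [ab e_ab]]] := edge_ends e.
  by rewrite (gz_basisZ ab e_ab) (lam_const a (vertex n01)) (lam_const b (vertex n01)).
Qed.

End Automorphism.

Theorem proposition10p3 (F : fieldType) (char2 : (2%:R : F) != 0)
  (g : NP F -> NP F) (gaut : is_autNP g)
  (gF : forall i j : 'I_6, j != i ->
          exists2 k : 'I_6, k != i & maps_line_to g (bold F i j) (bold F i k)) :
  is_scalar_autNP g.
Proof.
case: gaut => g_lin /bij_inj g_inj g_mul g_U g_Z.
pose gL : {linear NP F -> NP F} := HB.pack g (GRing.isLinear.Build _ _ _ _ g g_lin).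
apply: (@scalar_aut F gL char2 g_inj g_mul _ _ gF) => [u|z].
- by apply/g_U; exists u.
- by apply/g_Z; exists z.
Qed.
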